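(* Consider a credit-attribution game in which every paper has exactly two authors, and the fractional attack model on player $x$ in the reliability extension of the full obligation game $\Gamma_{FO}$, with fixed $p_x\in[0,1]$, baseline reliabilities $p^*_l\in(0,1]$, cost slopes $L_l,R_l>0$ and budget $B\ge0$. Then the following profile is an optimal attack: sort the coauthors $l\in CA(x)$ in decreasing order of $C(x,l)/L_l$ (ties broken arbitrarily); for $i=1,\dots,|CA(x)|$ in turn, decrease the reliability of the $i$-th coauthor to $0$ while the remaining budget allows it; when the remaining budget does not allow decreasing it to $0$, decrease it as much as the remaining budget allows; leave all other reliabilities at their baseline values.
   Context: Credit-attribution game: authors $N=\{1,\dots,n\}$, papers $P_k$ with author sets $Auth_k$ and weights $w_k\in\mathbb{R}_+$. $CA(x)$ is the set of coauthors of $x$; for $l\in CA(x)$, $C(x,l)=\sum w_k$ over papers authored by both $x$ and $l$. $v_{FO}(S)=\sum\{w_k:Auth_k\subseteq S\}$. For $T\subseteq S$, $\Pi_{T,S}=\prod_{i\in T}p_i\prod_{i\in S\setminus T}(1-p_i)$; reliability extension $\overline v(S)=\sum_{T\subseteq S}v(T)\Pi_{T,S}$. Shapley value $Sh[v](x)=\frac1{n!}\sum_\pi[v(S^x_\pi\cup\{x\})-v(S^x_\pi)]$, $S^x_\pi$ the players preceding $x$ in $\pi$. Fractional attack on $x$: $p_x$ fixed; for each $j\ne x$ choose $p_j\in[0,1]$ at cost $u_j(p_j)=L_j(p^*_j-p_j)$ if $p_j<p^*_j$, $R_j(p_j-p^*_j)$ if $p_j\ge p^*_j$; feasible if $\sum_{j\ne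 x}u_j(p_j)\le B$; an optimal attack is a feasible profile minimizing $Sh[\overline{v_{FO}}](x)$. *)

From HB Require Import structures.
From mathcomp Require Import all_boot all_order all_algebra all_fingroup.
From mathcomp Require Import reals.
Set Implicit Arguments. Unset Strict Implicit. Unset Printing Implicit Defensive.
Import Order.TTheory GRing.Theory Num.Theory.
Local Open Scope ring_scope.

Section CreditAttribution.
Variables (R : realType) (n m : nat).
(* authors are 'I_n, papers are 'I_m *)
Variables (Auth : 'I_m -> {set 'I_n}) (w : 'I_m -> R).

Definition vFO (S : {set 'I_n}) : R := \sum_(k : 'I_m | Auth k \subset S) w k.

Definition PiTS (p : 'I_n -> R) (T S : {set 'I_n}) : R :=
  (\prod_(i in T) p i) * \prod_(i in S :\: T) (1 - p i).

Definition rel_ext (v : {set 'I_n} -> R) (p : 'I_n -> R) (S : {set 'I_n}) : R :=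
  \sum_(T : {set 'I_n} | T \subset S) v T * PiTS p T S.

(* players preceding x in the ordering pi (pi y = position of player y) *)
Definition preceding (pi : {perm 'I_n}) (x : 'I_n) : {set 'I_n} :=
  [set y | pi y < pi x]%N.

Definition shapley (v : {set 'I_n} -> R) (x : 'I_n) : R :=
  (n`!%:R)^-1 * \sum_(pi : {perm 'I_n})
     (v (x |: preceding pi x) - v (preceding pi x)).

Definition coauthors (x : 'I_n) : {set 'I_n} :=
  [set l | (l != x) && [exists k : 'I_m, (x \in Auth k) && (l \in Auth k)]].

Definition Cxl (x l : 'I_n) : R :=
  \sum_(k : 'I_m | (x \in Auth k) && (l \in Auth k)) w k.

Variables (pstar L Rs : 'I_n -> R).

Definition cost (j : 'I_n) (pj : R) : R :=
  if pj < pstar j then L j * (pstar j - pj) else Rs j * (pj - pstar j).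

Definition feasible (x : 'I_n) (px B : R) (p : 'I_n -> R) : Prop :=
  p x = px /\ (forall j, j != x -> 0 <= p j <= 1) /\
  \sum_(j : 'I_n | j != x) cost j (p j) <= B.

Definition attack_value (x : 'I_n) (p : 'I_n -> R) : R :=
  shapley (rel_ext vFO p) x.

Definition optimal_attack (x : 'I_n) (px B : R) (p : 'I_n -> R) : Prop :=
  feasible x px B p /\
  forall q, feasible x px B q -> attack_value x p <= attack_value x q.

Definition upd (p : 'I_n -> R) (l : 'I_n) (a : R) : 'I_n -> R :=
  fun j => if j == l then a else p j.

Fixpoint greedy_aux (b : R) (s : seq 'I_n) (p : 'I_n -> R) : 'I_n -> R :=
  match s with
  | [::] => p
  | l :: s' =>
      if L l * pstar l <= b then greedy_aux (b - L l * pstar l) s' (upd p l 0)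
      else upd p l (pstar l - b / L l)
  end.

Definition baseline (x : 'I_n) (px : R) : 'I_n -> R :=
  fun j => if j == x then px else pstar j.

Definition greedy_profile (x : 'I_n) (px B : R) (s : seq 'I_n) : 'I_n -> R :=
  greedy_aux B s (baseline x px).

End CreditAttribution.

From HB Require Import structures.
From mathcomp Require Import all_boot all_order all_algebra all_fingroup.
From mathcomp Require Import reals.
From mathcomp Require Import ring lra.
Import Order.TTheory GRing.Theory Num.Theory.
Local Open Scope ring_scope.

(* Because every paper has exactly two authors, the reliability extension of
   v_FO is S |-> sum of w_k prod_(i in Auth_k) p_i over the papers inside S,
   and the Shapley value splits the worth of each paper equally between its
   two authors; hence the attacked value is p_x / 2 * sum_(l in CA(x)) C(x,l) p_l.
   Minimising it is a fractional knapsack problem: lowering p_l by d gains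
   C(x,l) d at cost L_l d, and raising p_l never helps.  Optimality of the
   greedy profile g is weak LP duality: with rho the ratio C(x,l)/L_l of the
   coauthor at which the budget runs out (rho = 0 if it never does), the
   per-coauthor inequalities C(x,l) (g_l - q_l) <= rho (u_l(q_l) - u_l(g_l))
   sum to sum_l C(x,l) (g_l - q_l) <= rho (sum_l u_l(q_l) - B) <= 0 for every
   feasible q. *)

Lemma ler_sum_nneg_subset (R : numDomainType) (I : Type) (s : seq I)
    (P Q : {pred I}) (F : I -> R) :
  {subset Q <= P} -> {in [predD P & Q], forall i, 0 <= F i} ->
  \sum_(i <- s | Q i) F i <= \sum_(i <- s | P i) F i.
Proof.
move=> QP PQF; rewrite big_mkcond [leRHS]big_mkcond ler_sum // => i _.
by move/implyP: (QP i); move: (PQF i); rewrite !inE -!topredE /=; do !case: ifP.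
Qed.

Section ShapleyPairs.
Variables (R : realType) (n m : nat).

Lemma card_perm_lt (x y : 'I_n) : x != y ->
  (#|[set pi : {perm 'I_n} | pi x < pi y]| * 2 = n`!)%N.
Proof.
move=> xy; set A := [set pi : {perm 'I_n} | _].
pose swap (pi : {perm 'I_n}) := (pi * tperm (pi x) (pi y))%g.
have swapK : involutive swap.
  by move=> pi; rewrite /swap !permM tpermL tpermR tpermC -mulgA tperm2 mulg1.
have swap_lt pi : (swap pi x < swap pi y)%N = (pi y < pi x)%N.
  by rewrite /swap !permM tpermL tpermR.
have cardC : #|~: A| = #|A|.
  rewrite -(card_imset _ (inv_inj swapK)); apply: eq_card => pi.
  rewrite inE -{1}(swapK pi) (mem_imset _ _ (inv_inj swapK)) !inE swap_lt.
  have : pi x != pi y by rewrite (inj_eq perm_inj).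
  by rewrite -leqNgt leq_eqVlt -(inj_eq val_inj) /= => /negbTE->.
by rewrite muln2 -addnn -{2}cardC cardsC card_Sn.
Qed.

Lemma card2_set2 (A : {set 'I_n}) x : #|A| = 2%N -> x \in A ->
  exists2 y, y != x & A = [set x; y].
Proof.
move/eqP/cards2P => [a [b [ab ->]]]; rewrite !inE => /orP[]/eqP->.
  by exists b; rewrite // eq_sym.
by exists a; rewrite // setUC.
Qed.

Lemma sum_PiTS_superset (p : 'I_n -> R) (A S : {set 'I_n}) : A \subset S ->
  \sum_(T : {set 'I_n} | (T \subset S) && (A \subset T)) PiTS p T S =
  \prod_(i in A) p i.
Proof.
move=> AS.
pose F i := if i \in S then p i else 0.
pose G i := if i \in S then (if i \in A then 0 else 1 - p i) else 1.
rewrite big_mkcond [RHS]big_mkcond /=.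
rewrite (eq_bigr (fun i => F i + G i)); last first.
  move=> i _; rewrite /F /G; case iA: (i \in A).
    by rewrite (subsetP AS i iA) addr0.
  by case: (i \in S); rewrite ?add0r // addrC subrK.
rewrite (@bigA_distr R 0 1 *%R +%R) /=; apply: eq_bigr => J _.
have [JS|/subsetPn[i iJ iS]] := boolP (J \subset S); last first.
  by rewrite (bigD1 i) //= iJ /F (negbTE iS) mul0r.
have [AJ|/subsetPn[i iA iJ]] := boolP (A \subset J); last first.
  by rewrite (bigD1 i) //= (negbTE iJ) /G (subsetP AS i iA) iA mul0r.
rewrite /PiTS !(big_mkcond (fun i => i \in _)) -big_split /=.
apply: eq_bigr => i _; rewrite /F /G !inE.
have := subsetP JS i; have := subsetP AJ i.
case: (i \in J); case: (i \in A); case: (i \in S) => //= h1 h2;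
  rewrite ?mulr1 ?mul1r //; by [have := h1 isT | have := h2 isT].
Qed.

Variables (Auth : 'I_m -> {set 'I_n}) (w : 'I_m -> R).

Lemma rel_ext_vFO (p : 'I_n -> R) (S : {set 'I_n}) :
  rel_ext (vFO Auth w) p S =
  \sum_(k | Auth k \subset S) w k * \prod_(i in Auth k) p i.
Proof.
rewrite /rel_ext /vFO; under eq_bigr do rewrite big_distrl /=.
rewrite (exchange_big_dep (fun k => Auth k \subset S)) /=; last first.
  by move=> T k TS AT; apply: subset_trans AT TS.
apply: eq_bigr => k AS; rewrite -(sum_PiTS_superset p _ _ AS) mulr_sumr.
by apply: eq_bigr.
Qed.

Lemma shapley_pair_game (c : 'I_m -> R) (v : {set 'I_n} -> R) x :
  (forall k, #|Auth k| = 2%N) ->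
  (forall S, v S = \sum_(k | Auth k \subset S) c k) ->
  shapley v x = \sum_(k | x \in Auth k) c k / 2.
Proof.
move=> Auth2 vE; rewrite /shapley.
under eq_bigr do rewrite !vE !(big_mkcond (fun k => Auth k \subset _)) -sumrB.
rewrite exchange_big mulr_sumr [RHS]big_mkcond; apply: eq_bigr => k _ /=.
have [xA|xNA] := boolP (x \in Auth k); last first.
  have AxE : Auth k :\ x = Auth k.
    by apply/setDidPl; rewrite disjoint_sym disjoints1.
  by rewrite big1 ?mulr0 // => pi _; rewrite -subDset AxE subrr.
have [y yx AE] := card2_set2 _ _ (Auth2 k) xA.
rewrite (eq_bigr (fun pi : {perm 'I_n} => if (pi y < pi x)%N then c k else 0));
  last first.
  move=> pi _; rewrite AE !subUset !sub1set !inE eqxx ltnn (negbTE yx) /=.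
  by case: ifP; rewrite subr0.
rewrite -big_mkcond (eq_bigl [in [set pi : {perm 'I_n} | (pi y < pi x)%N]]);
  last by move=> pi; rewrite inE.
have cardA := card_perm_lt _ _ yx; set A := [set pi | _] in cardA *.
have A0 : #|A|%:R != 0 :> R.
  by rewrite pnatr_eq0 -lt0n -(ltn_pmul2r (isT : 0 < 2)%N) cardA fact_gt0.
by rewrite sumr_const -cardA natrM -mulr_natr; field.
Qed.

Lemma sum_pairs_coauthors (p : 'I_n -> R) x : (forall k, #|Auth k| = 2%N) ->
  \sum_(k | x \in Auth k) w k * \prod_(i in Auth k) p i / 2 =
  p x / 2 * \sum_(l in coauthors Auth x) Cxl Auth w x l * p l.
Proof.
move=> Auth2; rewrite /Cxl mulr_sumr.
under [RHS]eq_bigr do rewrite big_distrl mulr_sumr /=.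
rewrite (exchange_big_dep (fun k => x \in Auth k)) /=; last by move=> l k _ /andP[].
apply: eq_bigr => k xA; have [y yx AE] := card2_set2 _ _ (Auth2 k) xA.
rewrite [RHS](big_pred1 y) => [|l]; last first.
  rewrite /= AE !inE eqxx /=; have [->|lx] := eqVneq l x.
    by rewrite eq_sym (negbTE yx).
  have [->|_] := eqVneq l y; rewrite ?andbF //= andbT.
  by apply/existsP; exists k; rewrite xA AE !inE eqxx orbT.
rewrite AE big_setU1 ?big_set1 ?inE 1?eq_sym //=; ring.
Qed.

Lemma attack_value_pairs (p : 'I_n -> R) x : (forall k, #|Auth k| = 2%N) ->
  attack_value Auth w x p =
  p x / 2 * \sum_(l in coauthors Auth x) Cxl Auth w x l * p l.
Proof.
move=> Auth2; rewrite -sum_pairs_coauthors //.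
by apply: shapley_pair_game => // S; apply: rel_ext_vFO.
Qed.

End ShapleyPairs.

Section GreedyKnapsack.
Variables (R : realType) (n : nat) (pstar L Rs : 'I_n -> R) (A : {pred 'I_n}).
Hypotheses (L_gt0 : {in A, forall j, 0 < L j})
  (pstar_gt0 : {in A, forall j, 0 < pstar j})
  (Rs_ge0 : {in A, forall j, 0 <= Rs j}).

Local Notation cost := (cost pstar L Rs).
Local Notation greedy := (greedy_aux pstar L).

Lemma greedy_aux_notin b s p j : j \notin s -> greedy b s p j = p j.
Proof.
elim: s b p => [|l s IHs] b p //=; rewrite inE negb_or => /andP[jl js].
by case: ifP => _; rewrite ?IHs // /upd (negbTE jl).
Qed.

Lemma cost_pstar j : cost j (pstar j) = 0.
Proof. by rewrite /cost ltxx subrr mulr0. Qed.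

Lemma cost_ge0 j y : j \in A -> 0 <= cost j y.
Proof.
move=> jA; rewrite /cost; case: ifP => hy; apply: mulr_ge0.
- exact: ltW (L_gt0 _ jA).
- by rewrite subr_ge0 ltW.
- exact: Rs_ge0.
- by rewrite subr_ge0 leNgt hy.
Qed.

Lemma cost_decrease j d : j \in A -> 0 <= d -> cost j (pstar j - d) = L j * d.
Proof.
move=> jA; rewrite le0r => /orP[/eqP->|d0]; first by rewrite subr0 cost_pstar mulr0.
by rewrite /cost ltrBlDr ltrDl d0 opprB addrC subrK.
Qed.

Lemma cost_drop j : j \in A -> cost j 0 = L j * pstar j.
Proof.
by move=> jA; have := cost_decrease _ _ jA (ltW (pstar_gt0 _ jA)); rewrite subrr.
Qed.

Lemma greedy_aux_cost s b p : uniq s -> {subset s <= A} -> 0 <= b ->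
  {in s, forall l, p l = pstar l} ->
  \sum_(l <- s) cost l (greedy b s p l) <= b.
Proof.
elim: s b p => [|l s IHs] b p /=; first by rewrite big_nil.
move=> /andP[ls us] sA b0 pE; rewrite big_cons.
have lA := sA l (mem_head l s); have sA' k ks := sA k (mem_behead ks).
have updE a : {in s, forall k, upd p l a k = pstar k}.
  move=> k ks; rewrite /upd ifN; first by apply: pE; rewrite inE ks orbT.
  by apply: contraNneq ls => <-.
case: ifP => hb.
  have b'0 : 0 <= b - L l * pstar l by rewrite subr_ge0.
  have := IHs _ (upd p l 0) us sA' b'0 (updE 0).
  by rewrite greedy_aux_notin // /upd eqxx cost_drop //; lra.
rewrite big1_seq => [|k /andP[_ ks]]; last by rewrite updE ?cost_pstar.
have Ll := L_gt0 _ lA.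
rewrite addr0 /upd eqxx cost_decrease ?divr_ge0 ?(ltW Ll) //.
by rewrite mulrCA divff ?mulr1 ?gt_eqF.
Qed.

Lemma greedy_aux_bounds s b p j :
  {subset s <= A} -> {in A, forall l, pstar l <= 1} -> 0 <= b -> (forall i, 0 <= p i <= 1) -> 0 <= greedy b s p j <= 1.
Proof.
move=> + pstar_le1; elim: s b p => [|l s IHs] b p sA b0 p01 /=; first exact: p01.
have lA := sA l (mem_head l s); have Ll := L_gt0 _ lA.
case: ifP => hb.
  apply: IHs.
  - by move=> k ks; apply: sA; rewrite inE ks orbT.
  - by rewrite subr_ge0.
  - by move=> i; rewrite /upd; case: ifP; rewrite ?lexx ?ler01.
rewrite /upd; case: ifP => // _.
have bL0 : 0 <= b / L l by rewrite divr_ge0 // ltW.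
have bLp : b / L l < pstar l by rewrite ltr_pdivrMr // mulrC ltNge hb.
have p1 := pstar_le1 _ lA; apply/andP; split; lra.
Qed.

Section Duality.
Variables (C q : 'I_n -> R).
Hypotheses (C_ge0 : {in A, forall l, 0 <= C l}) (q_ge0 : {in A, forall l, 0 <= q l}).

Lemma gain_le_cost k rho : k \in A -> 0 <= rho -> C k / L k <= rho ->
  C k * (pstar k - q k) <= rho * cost k (q k).
Proof.
move=> kA rho0; rewrite ler_pdivrMr ?(L_gt0 _ kA) // => CL.
rewrite /cost; case: ifP => hq.
  by rewrite mulrA ler_wpM2r // subr_ge0 ltW.
apply: (@le_trans _ _ 0).
  by rewrite mulr_ge0_le0 ?(C_ge0 _ kA) // subr_le0 leNgt hq.
by rewrite mulr_ge0 // mulr_ge0 ?(Rs_ge0 _ kA) // subr_ge0 leNgt hq.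
Qed.

Lemma drop_gain_le_cost k rho : k \in A -> 0 <= rho -> rho <= C k / L k ->
  rho * (L k * pstar k - cost k (q k)) <= C k * q k.
Proof.
move=> kA rho0; rewrite ler_pdivlMr ?(L_gt0 _ kA) // => LC.
have q0 := q_ge0 _ kA.
rewrite /cost; case: ifP => hq.
  have -> : L k * pstar k - L k * (pstar k - q k) = L k * q k by ring.
  by rewrite mulrA ler_wpM2r.
have pq : pstar k <= q k by rewrite leNgt hq.
have Rq : 0 <= rho * (Rs k * (q k - pstar k)).
  by rewrite mulr_ge0 // mulr_ge0 ?(Rs_ge0 _ kA) // subr_ge0.
have Lp : rho * L k * pstar k <= C k * pstar k.
  by rewrite ler_wpM2r // ltW ?(pstar_gt0 _ kA).
have Cp : C k * pstar k <= C k * q k by rewrite ler_wpM2l ?(C_ge0 _ kA).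
rewrite mulrBr mulrA; lra.
Qed.

Lemma sum_gain_le_cost rho s : {subset s <= A} -> 0 <= rho ->
  {in s, forall l, C l / L l <= rho} ->
  \sum_(l <- s) C l * (pstar l - q l) <= rho * \sum_(l <- s) cost l (q l).
Proof.
move=> sA rho0 hrho; rewrite mulr_sumr big_seq [leRHS]big_seq.
by apply: ler_sum => l ls; apply: gain_le_cost; rewrite ?sA ?hrho.
Qed.

(* rho is a Lagrange multiplier for the budget constraint; the bound M lets
   the induction keep rho below the ratio of the coauthor just dropped. *)
Lemma greedy_aux_dual s b p M :
  uniq s -> {subset s <= A} -> sorted (fun a b => C b / L b <= C a / L a) s ->
  0 <= b -> {in s, forall l, p l = pstar l} ->
  0 <= M -> {in s, forall l, C l / L l <= M} ->
  exists2 rho, 0 <= rho <= M &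
    \sum_(l <- s) C l * (greedy b s p l - q l) <=
    rho * (\sum_(l <- s) cost l (q l) - b).
Proof.
elim: s b p M => [|l s IHs] b p M /=.
  by move=> _ _ _ _ _ M0 _; exists 0; rewrite ?lexx // !big_nil mul0r.
move=> /andP[ls us] sA srt b0 pE M0 hM.
have lA := sA l (mem_head l s); have sA' k ks := sA k (mem_behead ks).
have ratio_l0 : 0 <= C l / L l.
  by rewrite divr_ge0 ?(C_ge0 _ lA) ?ltW ?(L_gt0 _ lA).
have ratio_le : {in s, forall k, C k / L k <= C l / L l}.
  apply/allP; apply: order_path_min srt => i j k /= ji kj.
  exact: le_trans kj ji.
have updE a : {in s, forall k, upd p l a k = pstar k}.
  move=> k ks; rewrite /upd ifN; first by apply: pE; rewrite inE ks orbT.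
  by apply: contraNneq ls => <-.
rewrite !big_cons; case: ifP => hb.
  have b'0 : 0 <= b - L l * pstar l by rewrite subr_ge0.
  have [rho /andP[rho0 rho_le] IH] :=
    IHs _ (upd p l 0) _ us sA' (path_sorted srt) b'0 (updE 0) ratio_l0 ratio_le.
  exists rho; first by rewrite rho0 (le_trans rho_le) ?hM ?mem_head.
  have := drop_gain_le_cost l rho lA rho0 rho_le.
  by rewrite greedy_aux_notin // /upd eqxx in IH *; lra.
exists (C l / L l); first by rewrite ratio_l0 hM ?mem_head.
rewrite (eq_big_seq (fun k => C k * (pstar k - q k))) => [|k ks];
  last by rewrite updE.
have := sum_gain_le_cost _ s sA' ratio_l0 ratio_le.
have := gain_le_cost l _ lA ratio_l0 (lexx _).
have -> : C l * (upd p l (pstar l - b / L l) l - q l) =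
          C l * (pstar l - q l) - C l / L l * b by rewrite /upd eqxx; ring.
rewrite !mulrBr mulrDr; lra.
Qed.

Lemma greedy_aux_optimal s b p :
  uniq s -> {subset s <= A} -> sorted (fun a b => C b / L b <= C a / L a) s ->
  0 <= b -> {in s, forall l, p l = pstar l} ->
  \sum_(l <- s) cost l (q l) <= b ->
  \sum_(l <- s) C l * greedy b s p l <= \sum_(l <- s) C l * q l.
Proof.
move=> us sA srt b0 pE qb.
have ratio_ge0 : {in s, forall l, 0 <= C l / L l}.
  by move=> l /sA lA; rewrite divr_ge0 ?(C_ge0 _ lA) ?ltW ?(L_gt0 _ lA).
pose M := \sum_(l <- s) C l / L l.
have M0 : 0 <= M by rewrite /M big_seq; apply: sumr_ge0.
have ratio_le : {in s, forall l, C l / L l <= M}.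
  move=> l ls; rewrite /M (bigD1_seq l) //= lerDl big_seq_cond.
  by apply: sumr_ge0 => k /andP[/ratio_ge0].
have [rho /andP[rho0 _] dual] :=
  greedy_aux_dual s b p M us sA srt b0 pE M0 ratio_le.
rewrite -subr_le0 -sumrB; under eq_bigr do rewrite -mulrBr.
by apply: le_trans dual _; rewrite mulr_ge0_le0 // subr_le0.
Qed.

End Duality.

End GreedyKnapsack.

Section FractionalAttack.
Context {R : realType} {n m : nat} {Auth : 'I_m -> {set 'I_n}} {w : 'I_m -> R}.
Context {pstar L Rs : 'I_n -> R} {x : 'I_n} {px B : R} {s : seq 'I_n}.
Hypotheses (w_ge0 : forall k, 0 <= w k) (px01 : 0 <= px <= 1)
  (pstar01 : forall j, j != x -> 0 < pstar j <= 1)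
  (L_gt0 : forall j, j != x -> 0 < L j) (Rs_gt0 : forall j, j != x -> 0 < Rs j)
  (B_ge0 : 0 <= B) (s_uniq : uniq s)
  (s_coauthors : forall l, (l \in s) = (l \in coauthors Auth x))
  (s_sorted : sorted (fun a b => Cxl Auth w x b / L b <= Cxl Auth w x a / L a) s).

Local Notation g := (greedy_profile pstar L x px B s).

Let s_neq_x : {subset s <= predC1 x}.
Proof. by move=> l; rewrite s_coauthors inE => /andP[]. Qed.

Let x_notin_s : x \notin s.
Proof. by apply/negP => /s_neq_x; rewrite inE eqxx. Qed.

Let pstar_gt0 : {in predC1 x, forall j, 0 < pstar j}.
Proof. by move=> j jx; have /andP[] := pstar01 _ jx. Qed.

Let Rs_ge0 : {in predC1 x, forall j, 0 <= Rs j}.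
Proof. by move=> j jx; rewrite ltW ?Rs_gt0. Qed.

Let baseline_on_s : {in s, forall l, baseline pstar x px l = pstar l}.
Proof. by move=> l /s_neq_x lx; rewrite /baseline (negbTE lx). Qed.

Lemma greedy_profile_x : g x = px.
Proof. by rewrite /greedy_profile greedy_aux_notin // /baseline eqxx. Qed.

Lemma greedy_profile_feasible : feasible pstar L Rs x px B g.
Proof.
split; [exact: greedy_profile_x | split].
  move=> j _; apply: (greedy_aux_bounds _ _ _ _ (predC1 x)) => //.
  - by move=> l lx; have /andP[] := pstar01 _ lx.
  - move=> i; rewrite /baseline; case: eqP => [_|/eqP ix] //.
    by have /andP[p0 ->] := pstar01 _ ix; rewrite ltW.
rewrite (bigID [in s]) /= [X in _ + X]big1 => [|j /andP[jx js]]; last first.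
  by rewrite /greedy_profile greedy_aux_notin // /baseline (negbTE jx) cost_pstar.
rewrite addr0 (eq_bigl [in s]) => [|j]; last by rewrite andb_idl // => /s_neq_x.
by rewrite -big_uniq //; apply: (greedy_aux_cost _ _ _ _ _ (predC1 x)).
Qed.

Lemma greedy_profile_min_weighted_sum q : feasible pstar L Rs x px B q ->
  \sum_(l in coauthors Auth x) Cxl Auth w x l * g l <=
  \sum_(l in coauthors Auth x) Cxl Auth w x l * q l.
Proof.
move=> [_ [q01 q_cost]].
have sumE (F : 'I_n -> R) :
    \sum_(l in coauthors Auth x) F l = \sum_(l <- s) F l.
  by rewrite big_uniq //; apply: eq_bigl => l; rewrite /= s_coauthors.
rewrite !sumE; apply: (greedy_aux_optimal _ _ _ _ Rs (predC1 x)) => //.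
- by move=> l _; apply: sumr_ge0 => k _.
- by move=> l /q01/andP[].
rewrite big_uniq //; apply: le_trans q_cost.
apply: ler_sum_nneg_subset => [l ls|l]; first exact: s_neq_x.
rewrite !inE => /andP[_ lx]; exact: (cost_ge0 _ _ _ _ _ (predC1 x)).
Qed.

End FractionalAttack.

Theorem theorem10 (R : realType) (n m : nat)
  (Auth : 'I_m -> {set 'I_n}) (w : 'I_m -> R)
  (pstar L Rs : 'I_n -> R) (x : 'I_n) (px B : R) (s : seq 'I_n) :
  (forall k, #|Auth k| = 2%N) ->
  (forall k, 0 <= w k) ->
  0 <= px <= 1 ->
  (forall j, j != x -> 0 < pstar j <= 1) ->
  (forall j, j != x -> 0 < L j) ->
  (forall j, j != x -> 0 < Rs j) ->
  0 <= B ->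
  (* s lists the coauthors of x in decreasing order of C(x,l)/L_l *)
  uniq s ->
  (forall l, (l \in s) = (l \in coauthors Auth x)) ->
  sorted (fun a b => Cxl Auth w x b / L b <= Cxl Auth w x a / L a) s ->
  optimal_attack Auth w pstar L Rs x px B (greedy_profile pstar L x px B s).
Proof.
move=> Auth2 w_ge0 px01 pstar01 L_gt0 Rs_gt0 B_ge0 s_uniq s_coauthors s_sorted.
split; first exact: greedy_profile_feasible.
move=> q q_feasible; have [qx _] := q_feasible.
have px_ge0 : 0 <= px / 2 by rewrite divr_ge0 //; case/andP: px01.
rewrite !attack_value_pairs // (greedy_profile_x s_coauthors) qx ler_wpM2l //.
exact: greedy_profile_min_weighted_sum q_feasible.
Qed.
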